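(* Let $n\ge1$, $\lambda_s>0$, $\lambda>0$ and $n_0\ge 3$. Then for every node $i\in\{1,\dots,n_0\}$, $$\Delta^{r(n_0)}_1\le \Delta^{\ell(n_0)}_i\le 2\,\Delta^{r(n_0)}_1 .$$
   Context: Version-age model. A gossip network on a finite node set $\mathcal N$ is specified by source rates $\lambda_{0j}>0$ ($j\in\mathcal N$) and gossip rates $\lambda_{ij}\ge 0$ for ordered pairs $i\neq j$ in $\mathcal N$ ($\lambda_{ij}$ is the rate at which node $i$ sends updates to node $j$); $\lambda_s>0$ is the source's own update rate. For nonempty $S\subseteq\mathcal N$ let $N(S)=\{i\in\mathcal N\setminus S:\ \sum_{j\in S}\lambda_{ij}>0\}$. The version ages $\Delta_S$ ($\emptyset\neq S\subseteq\mathcal N$) are the numbers defined by $$\Delta_S=\frac{\lambda_s+\sum_{i\in N(S)}\big(\sum_{j\in S}\lambda_{ij}\big)\Delta_{S\cup\{i\}}}{\sum_{j\in S}\lambda_{0j}+\sum_{i\in N(S)}\sum_{j\in S}\lambda_{ij}},$$ which is well defined by downward induction on $|S|$. Write $\Delta_i=\Delta_{\{i\}}$. Line network $L(n_0)$ with parameter $n$: node set $\{1,\dots,n_0\}$, $\lambda_{0j}=\lambda/n$ for all $j$, $\lambda_{i,i+1}=\lambda_{i+1,i}=\lambda/2$ for $1\le i\le n_0-1$, all other $\lambda_{ij}=0$; $\Delta^{\ell(n_0)}_i$ denotes $\Delta_i$ in it. Ring network $R(n_0)$ ($n_0\ge3$) with parameter $n$: the same as $L(n_0)$ plus $\lambda_{n_0,1}=\lambda_{1,n_0}=\lambda/2$;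 $\Delta^{r(n_0)}_i$ denotes $\Delta_i$ in it. *)

From mathcomp Require Import all_boot all_order all_algebra.
Set Implicit Arguments. Unset Strict Implicit. Unset Printing Implicit Defensive.
Import Order.TTheory GRing.Theory Num.Theory.
Local Open Scope ring_scope.

Section VersionAge.
Variables (R : realFieldType) (T : finType).
(* l0 j = lambda_{0j} (source -> j), lg i j = lambda_{ij} (i -> j), ls = lambda_s *)
Variables (l0 : T -> R) (lg : T -> T -> R) (ls : R).

Definition rateInto (i : T) (S : {set T}) : R := \sum_(j in S) lg i j.

Definition nbr (S : {set T}) : {set T} :=
  [set i | (i \notin S) && (0 < rateInto i S)].

(* The recursion of the version-age equations, with fuel k; the fuel decreases
   by one each time S grows by one element. *)
Fixpoint ageAux (k : nat) (S : {set T}) : R :=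
  match k with
  | 0%N => 0
  | k'.+1 =>
      (ls + \sum_(i in nbr S) rateInto i S * ageAux k' (i |: S)) /
      (\sum_(j in S) l0 j + \sum_(i in nbr S) rateInto i S)
  end.

(* Delta_S, defined by downward induction on |S|: fuel #|T| - #|S| + 1
   suffices (for S = the whole node set, N(S) is empty). *)
Definition versionAge (S : {set T}) : R := ageAux (#|T| - #|S|).+1 S.

Definition nodeAge (i : T) : R := versionAge [set i].
End VersionAge.

(* Line network L(n0) with parameter n; nodes 1..n0 are represented by
   the ordinals 0..n0-1 of 'I_n0. *)
Definition line_l0 (R : realFieldType) (n n0 : nat) (lam : R) : 'I_n0 -> R :=
  fun _ => lam / n%:R.

Definition line_lg (R : realFieldType) (n0 : nat) (lam : R) : 'I_n0 -> 'I_n0 -> R :=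
  fun i j => if ((i : nat).+1 == j) || ((j : nat).+1 == i) then lam / 2 else 0.

Definition ring_lg (R : realFieldType) (n0 : nat) (lam : R) : 'I_n0 -> 'I_n0 -> R :=
  fun i j =>
    if [|| (i : nat).+1 == j, (j : nat).+1 == i,
           ((i : nat) == n0.-1) && ((j : nat) == 0%N)
         | ((j : nat) == n0.-1) && ((i : nat) == 0%N)]
    then lam / 2 else 0.

Definition lineAge (R : realFieldType) (n n0 : nat) (ls lam : R) (i : 'I_n0) : R :=
  nodeAge (@line_l0 R n n0 lam) (@line_lg R n0 lam) ls i.

Definition ringAge (R : realFieldType) (n n0 : nat) (ls lam : R) (i : 'I_n0) : R :=
  nodeAge (@line_l0 R n n0 lam) (@ring_lg R n0 lam) ls i.

From mathcomp Require Import all_boot all_order all_algebra.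
From mathcomp Require Import zify lra.
Set Implicit Arguments. Unset Strict Implicit. Unset Printing Implicit Defensive.
Import Order.TTheory GRing.Theory Num.Theory.
Local Open Scope ring_scope.

(* When all source rates equal c, the recursion for Delta_S depends on S only
   through |S| and through the inflow rates into S.  If along every set reachable
   from the starting node the total inflow rate stays in [rlo, rhi], then Delta_S
   is sandwiched between the ages homAge rhi and homAge rlo of an idealized
   network whose k-sets are fed at one constant rate (age_sandwich); the key
   point is that the recursion step is antitone in the inflow rate
   (rate_average_antitone).  Halving that constant rate at most doubles the
   ideal age (homAge_double).

   The reachable sets are intervals in the line, fed at rate between lam / 2
   and lam, and arcs in the ring, always fed at rate exactly lam.  Hence
   Delta^r_1 = homAge lam, and homAge lam <= Delta^l_i <= homAge (lam / 2)
   <= 2 homAge lam. *)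

(* The map r |-> (ls + r * x) / (s + r) averages ls / s and x with weights s
   and r; when x <= ls / s it is therefore nonincreasing in the rate r. *)
Lemma rate_average_antitone (R : realFieldType) (ls s x r1 r2 : R) :
  0 < s -> 0 <= r1 -> r1 <= r2 -> 0 <= x -> x * s <= ls ->
  (ls + r2 * x) / (s + r2) <= (ls + r1 * x) / (s + r1).
Proof.
move=> s_gt0 r1_ge0 r12 x_ge0 xs_le.
have den2 : 0 < s + r2 by lra.
have den1 : 0 < s + r1 by lra.
rewrite ler_pdivrMr // mulrAC ler_pdivlMr //.
nra.
Qed.

Section UniformSource.
Variables (R : realFieldType) (T : finType) (c : R) (lg : T -> T -> R) (ls : R).
Hypotheses (c_gt0 : 0 < c) (ls_gt0 : 0 < ls) (lg_ge0 : forall i j, 0 <= lg i j).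

Local Notation age S := (versionAge (fun _ : T => c) lg ls S).

Definition outRate (S : {set T}) : R := \sum_(i in ~: S) rateInto lg i S.

Lemma rateInto_ge0 i S : 0 <= rateInto lg i S.
Proof. exact: sumr_ge0. Qed.

Lemma outRate_ge0 S : 0 <= outRate S.
Proof. by apply: sumr_ge0 => i _; apply: rateInto_ge0. Qed.

(* Nodes of ~: S outside N(S) have rate 0 into S, so weighted sums over N(S)
   may range over the whole complement of S. *)
Lemma sum_nbr S (F : T -> R) :
  \sum_(i in nbr lg S) rateInto lg i S * F i = \sum_(i in ~: S) rateInto lg i S * F i.
Proof.
rewrite big_mkcond [RHS]big_mkcond; apply: eq_bigr => i _.
rewrite /nbr !inE lt0r rateInto_ge0 andbT.
by case: (i \in S) => //=; case: eqP => [->|]; rewrite ?mul0r.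
Qed.

Lemma age_rec S : age S =
  (ls + \sum_(i in ~: S) rateInto lg i S * age (i |: S)) / (#|S|%:R * c + outRate S).
Proof.
have rate_nbr : \sum_(i in nbr lg S) rateInto lg i S = outRate S.
  transitivity (\sum_(i in nbr lg S) rateInto lg i S * 1).
    by apply: eq_bigr => i _; rewrite mulr1.
  by rewrite sum_nbr; apply: eq_bigr => i _; rewrite mulr1.
rewrite {1}/versionAge /= sum_nbr rate_nbr sumr_const -[c *+ _]mulr_natl.
congr ((_ + _) / _); apply: eq_bigr => i; rewrite inE => iNS.
have := max_card (i |: S); rewrite /versionAge cardsU1 iNS => card_le.
by have -> : (#|T| - #|S| = (#|T| - (1 + #|S|)).+1)%N by lia.
Qed.

Lemma age_full S : ~: S = set0 -> age S = ls / (#|S|%:R * c).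
Proof. by move=> SC0; rewrite age_rec /outRate SC0 !big_set0 !addr0. Qed.

(* Version age of an idealized network in which every set of k nodes is fed
   from outside at total rate rho; m counts the remaining growth steps. *)
Fixpoint homAge (rho : R) (m k : nat) : R :=
  match m with
  | 0%N => ls / (k%:R * c)
  | m'.+1 => (ls + rho * homAge rho m' k.+1) / (k%:R * c + rho)
  end.

Lemma bound_pred (g : R) k : 0 <= g -> g * (k.+1%:R * c) <= ls -> g * (k%:R * c) <= ls.
Proof.
move=> g_ge0; rewrite -addn1 natrD mulrDl mul1r => gk1.
have : 0 <= g * c by rewrite mulr_ge0 // ltW.
lra.
Qed.

Lemma homAge_range (rho : R) m k : 0 <= rho -> (0 < k)%N ->
  0 <= homAge rho m k /\ homAge rho m k * (k%:R * c) <= ls.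
Proof.
move=> rho_ge0; elim: m k => [|m IH] k k_gt0 /=.
  have kc_gt0 : 0 < k%:R * c by rewrite mulr_gt0 // ltr0n.
  by rewrite divfK ?gt_eqF // divr_ge0 // ltW.
have kc_gt0 : 0 < k%:R * c + rho by rewrite ltr_wpDr // mulr_gt0 // ltr0n.
have [g_ge0 g_le] := IH k.+1 isT.
have g_le' := bound_pred g_ge0 g_le.
set g := homAge rho m k.+1 in g_ge0 g_le' *.
split; first by rewrite divr_ge0 ?addr_ge0 ?mulr_ge0 // ltW.
rewrite mulrAC ler_pdivrMr //.
have := ler_wpM2l rho_ge0 g_le'; nra.
Qed.

Lemma homAge_double (rho : R) m k : 0 <= rho -> (0 < k)%N ->
  homAge rho m k <= 2 * homAge (2 * rho) m k.
Proof.
move=> rho_ge0; elim: m k => [|m IH] k k_gt0 /=.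
  have : 0 <= ls / (k%:R * c) by rewrite divr_ge0 ?mulr_ge0 // ltW.
  lra.
have kc_gt0 : 0 < k%:R * c by rewrite mulr_gt0 // ltr0n.
have [f_ge0 _] := @homAge_range (2 * rho) m k.+1 ltac:(lra) isT.
have g_le := IH k.+1 isT.
set g := homAge rho m k.+1 in g_le *.
set f := homAge (2 * rho) m k.+1 in f_ge0 g_le *.
rewrite mulrA ler_pdivrMr ?ltr_wpDr // mulrAC ler_pdivlMr ?ltr_wpDr ?mulr_ge0 //.
have num_le : ls + rho * g <= ls + 2 * rho * f.
  by have := ler_wpM2l rho_ge0 g_le; lra.
have num_ge0 : 0 <= ls + 2 * rho * f by rewrite addr_ge0 ?mulr_ge0 // ltW.
apply: le_trans (ler_wpM2r _ num_le) _; first lra.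
have := mulr_ge0 num_ge0 (ltW kc_gt0); nra.
Qed.

Lemma age_step (S : {set T}) (lo hi x y : R) : (0 < #|S|)%N -> 0 <= lo -> lo <= outRate S <= hi ->
  0 <= y -> y * (#|S|%:R * c) <= ls -> 0 <= x -> x * (#|S|%:R * c) <= ls ->
  (forall i, i \notin S -> 0 < rateInto lg i S -> y <= age (i |: S) <= x) ->
  (ls + hi * y) / (#|S|%:R * c + hi) <= age S <= (ls + lo * x) / (#|S|%:R * c + lo).
Proof.
move=> S_gt0 lo_ge0 /andP[lo_le le_hi] y_ge0 y_le x_ge0 x_le ageN.
have kc_gt0 : 0 < #|S|%:R * c by rewrite mulr_gt0 // ltr0n.
have den_ge0 : 0 <= (#|S|%:R * c + outRate S)^-1 by rewrite invr_ge0 addr_ge0 ?outRate_ge0 ?ltW.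
have term_bounds i : i \in ~: S -> rateInto lg i S * y <= rateInto lg i S * age (i |: S)
                                   <= rateInto lg i S * x.
  rewrite inE => iNS; have := rateInto_ge0 i S.
  rewrite le0r => /orP[/eqP ->|rate_gt0]; first by rewrite !mul0r lexx.
  by case/andP: (ageN i iNS rate_gt0) => lo_i hi_i; rewrite !ler_pM2l // lo_i.
have sum_ge : outRate S * y <= \sum_(i in ~: S) rateInto lg i S * age (i |: S).
  by rewrite /outRate mulr_suml; apply: ler_sum => i /term_bounds/andP[].
have sum_le : \sum_(i in ~: S) rateInto lg i S * age (i |: S) <= outRate S * x.
  by rewrite /outRate mulr_suml; apply: ler_sum => i /term_bounds/andP[].
rewrite age_rec; apply/andP; split.
  apply: le_trans (rate_average_antitone kc_gt0 (outRate_ge0 S) le_hi y_ge0 y_le) _.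
  by rewrite ler_wpM2r // lerD2l.
apply: le_trans (rate_average_antitone kc_gt0 lo_ge0 lo_le x_ge0 x_le).
by rewrite ler_wpM2r // lerD2l.
Qed.

Section Sandwich.
Variables (P : {set T} -> Prop) (rlo rhi : R).
Hypotheses (rlo_gt0 : 0 < rlo) (rlo_le_rhi : rlo <= rhi).
Hypothesis P_card_gt0 : forall S, P S -> (0 < #|S|)%N.
Hypothesis P_grow :
  forall S i, P S -> i \notin S -> 0 < rateInto lg i S -> P (i |: S).
Hypothesis P_outRate :
  forall S, P S -> (#|S| < #|T|)%N -> rlo <= outRate S <= rhi.

Lemma age_sandwich (S : {set T}) : P S ->
  homAge rhi (#|T| - #|S|) #|S| <= age S <= homAge rlo (#|T| - #|S|) #|S|.
Proof.
have rhi_ge0 : 0 <= rhi := le_trans (ltW rlo_gt0) rlo_le_rhi.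
move=> PS; move Em : (#|T| - #|S|)%N => m; elim: m S PS Em => [|m IH] S PS Em /=.
  have SC0 : ~: S = set0 by apply/eqP; rewrite -cards_eq0 cardsCs setCK; lia.
  by rewrite age_full // lexx.
have S_gt0 := P_card_gt0 PS.
have [x_ge0 x_le] := @homAge_range rlo m #|S|.+1 (ltW rlo_gt0) isT.
have [y_ge0 y_le] := @homAge_range rhi m #|S|.+1 rhi_ge0 isT.
apply: age_step => //; first exact: ltW.
- by apply: P_outRate => //; lia.
- exact: bound_pred.
- exact: bound_pred.
move=> i iNS rate_gt0.
have card_iS : #|i |: S| = #|S|.+1 by rewrite cardsU1 iNS.
by rewrite -card_iS; apply: IH; [apply: P_grow | rewrite card_iS; lia].
Qed.
End Sandwich.
End UniformSource.

(* Arcs of the ring 0, ..., n0 - 1: arc a k is the set of the k consecutive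
   nodes starting at a, wrapping around after n0 - 1.  The nodes bordering
   it are arc_before a and arc_after a k. *)
Section ArcArithmetic.
Local Open Scope nat_scope.
Variable n0 : nat.
Hypothesis n0_ge3 : 2 < n0.

Definition arc (a k j : nat) : bool := (a <= j < a + k) || (j + n0 < a + k).
Definition arc_before (a : nat) : nat := if a == 0 then n0.-1 else a.-1.
Definition arc_after (a k : nat) : nat := if a + k < n0 then a + k else a + k - n0.

Variable a : nat.
Hypothesis a_lt : a < n0.

Lemma arc_beforeP : (a = 0 /\ arc_before a = n0.-1) \/ (0 < a /\ arc_before a = a.-1).
Proof. by rewrite /arc_before; case: eqP => a0; [left | right; split; first lia]. Qed.

Lemma arc_before_lt : arc_before a < n0.
Proof. by case: arc_beforeP => [[_ ->]|[_ ->]]; lia. Qed.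

Variable k : nat.
Hypothesis k_gt0 : 0 < k.

Lemma arc_afterP : (a + k < n0 /\ arc_after a k = a + k) \/
                   (n0 <= a + k /\ arc_after a k = a + k - n0).
Proof. by rewrite /arc_after; case: ltnP; [left | right]. Qed.

Lemma arc_unwrapped j : a + k <= n0 -> arc a k j = (a <= j < a + k).
Proof.
rewrite /arc => ak; have -> : (j + n0 < a + k) = false by lia.
by rewrite orbF.
Qed.

Lemma arc_wrapped j : n0 <= a + k -> j < n0 -> arc a k j = (a <= j) || (j + n0 < a + k).
Proof.
rewrite /arc => ak j_lt; have -> : (j < a + k) = true by lia.
by rewrite andbT.
Qed.

(* A node outside an arc has an edge into it iff it borders the arc, and it
   has two such edges when it borders it on both sides. *)
Lemma arc_inflow i : i < n0 -> ~~ arc a k i ->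
  ((i.+1 < n0) && arc a k i.+1) + (0 < i) * ((i.-1 < n0) && arc a k i.-1)
  + (i == n0.-1) * ((0 < n0) && arc a k 0) + (i == 0) * ((n0.-1 < n0) && arc a k n0.-1)
  = (i == arc_before a) + (i == arc_after a k).
Proof.
move=> i_lt; case: arc_afterP => [[ak ->]|[ak ->]].
  rewrite !arc_unwrapped; try lia.
  by case: arc_beforeP => [[a0 ->]|[a0 ->]]; [subst a|];
    case: (eqVneq i n0.-1) => iN; case: (posnP i) => i0; rewrite /=; lia.
have [im1 nm1 n_gt0] : [/\ i.-1 < n0, n0.-1 < n0 & 0 < n0] by split; lia.
rewrite (arc_wrapped ak i_lt) (arc_wrapped ak im1) (arc_wrapped ak nm1) (arc_wrapped ak n_gt0).
case: (ltnP i.+1 n0) => i1 /=; first rewrite (arc_wrapped ak i1);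
  by case: arc_beforeP => [[a0 ->]|[a0 ->]]; [subst a|];
    case: (eqVneq i n0.-1) => iN; case: (posnP i) => i0; rewrite /=; lia.
Qed.

Lemma arc_short i : i < n0 -> ~~ arc a k i -> k < n0.
Proof. by rewrite /arc; lia. Qed.

Hypothesis k_lt : k < n0.

Lemma arc_grow_before j : j < n0 -> (j == arc_before a) || arc a k j = arc (arc_before a) k.+1 j.
Proof.
by rewrite /arc => j_lt; case: arc_beforeP => [[a0 ->]|[a0 ->]]; case: (ltnP (a + k) n0); lia.
Qed.

Lemma arc_grow_after j : j < n0 -> (j == arc_after a k) || arc a k j = arc a k.+1 j.
Proof. by rewrite /arc => j_lt; case: arc_afterP => [[ak ->]|[ak ->]]; lia. Qed.

Lemma arc_boundary_outside :
  ((arc_before a < n0) && ~~ arc a k (arc_before a))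
  + ((arc_after a k < n0) && ~~ arc a k (arc_after a k)) = 2.
Proof.
by rewrite /arc; case: arc_beforeP => [[a0 ->]|[a0 ->]]; case: arc_afterP => [[ak ->]|[ak ->]]; lia.
Qed.
End ArcArithmetic.

Definition interval (a k j : nat) : bool := (a <= j < a + k)%N.

(* A node outside an interval has an edge into it iff it is one of the two
   nodes bordering the interval. *)
Lemma interval_inflow n0 a k i : (a < n0)%N -> (0 < k)%N -> (i < n0)%N -> ~~ interval a k i ->
  (((i.+1 < n0) && interval a k i.+1) + (0 < i) * ((i.-1 < n0) && interval a k i.-1)
   = (0 < a) * (i == a.-1) + (i == a + k))%N.
Proof. by rewrite /interval; lia. Qed.

Lemma sum_eq_indicator n (p : pred nat) m :
  (\sum_(j in [set j : 'I_n | p j]) ((j : nat) == m) = (m < n) && p m)%N.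
Proof.
case: (ltnP m n) => m_lt /=; last first.
  by rewrite big1 // => j _; apply/eqP; rewrite eqb0; have := ltn_ord j; lia.
rewrite big_mkcond (bigD1 (Ordinal m_lt)) //= big1 ?addn0.
  by rewrite inE eqxx; case: (p m).
move=> j /negP j_neq; case: ifP => // _; apply/eqP; rewrite eqb0.
by apply/negP => /eqP j_m; apply: j_neq; apply/eqP/val_inj.
Qed.

Lemma exists_notin (T : finType) (S : {set T}) : (#|S| < #|T|)%N -> exists j, j \notin S.
Proof.
move=> S_lt; have : (0 < #|~: S|)%N by move: S_lt; rewrite [#|S|]cardsCs; lia.
by case/card_gt0P => j; rewrite inE; exists j.
Qed.

Section ReachableSets.
Variable n0 : nat.

Definition isInterval (S : {set 'I_n0}) : Prop :=
  exists a k, [/\ (a < n0)%N, (0 < k)%N & S = [set j : 'I_n0 | interval a k j]].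

Lemma isInterval_card_gt0 S : isInterval S -> (0 < #|S|)%N.
Proof.
case=> a [k [a_lt k_gt0 ->]]; apply/card_gt0P; exists (Ordinal a_lt).
by rewrite inE /interval /=; lia.
Qed.

Definition isArc (S : {set 'I_n0}) : Prop :=
  exists a k, [/\ (a < n0)%N, (0 < k)%N & S = [set j : 'I_n0 | arc n0 a k j]].

Lemma isArc_card_gt0 S : isArc S -> (0 < #|S|)%N.
Proof.
case=> a [k [a_lt k_gt0 ->]]; apply/card_gt0P; exists (Ordinal a_lt).
by rewrite inE /arc /=; lia.
Qed.

End ReachableSets.

Section Rates.
Variables (R : realFieldType) (n0 : nat) (lam : R).
Hypothesis lam_gt0 : 0 < lam.

Lemma line_lg_ge0 (i j : 'I_n0) : 0 <= line_lg lam i j.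
Proof. by rewrite /line_lg; case: ifP; rewrite // divr_ge0 ?ltW. Qed.

Lemma line_lgE (i j : 'I_n0) : line_lg lam i j =
  lam / 2 * (((j : nat) == i.+1) + (0 < i) * ((j : nat) == i.-1))%N%:R.
Proof.
rewrite /line_lg; case: ifP => edge.
  by rewrite (_ : (_ + _)%N = 1%N) ?mulr1 //; move: edge; lia.
by rewrite (_ : (_ + _)%N = 0%N) ?mulr0 //; move: edge; lia.
Qed.

Lemma line_rateInto (i : 'I_n0) (p : pred nat) :
  rateInto (line_lg lam) i [set j : 'I_n0 | p j] =
  lam / 2 * (((i.+1 < n0) && p i.+1) + (0 < i) * ((i.-1 < n0) && p i.-1))%N%:R.
Proof.
rewrite /rateInto (eq_bigr _ (fun j _ => line_lgE i j)) -mulr_sumr -natr_sum.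
by rewrite big_split /= -big_distrr /= !sum_eq_indicator.
Qed.

Lemma isInterval_grow (S : {set 'I_n0}) i : isInterval S -> i \notin S ->
  0 < rateInto (line_lg lam) i S -> isInterval (i |: S).
Proof.
case=> a [k [a_lt k_gt0 ->]]; rewrite inE => iNS.
rewrite line_rateInto interval_inflow // pmulr_rgt0 ?divr_gt0 // ltr0n => inflow.
have i_lt := ltn_ord i.
case: (boolP ((0 < a) && ((i : nat) == a.-1)))%N => i_before.
  exists a.-1, k.+1; split; [lia | done |].
  by apply/setP => j; rewrite !inE -val_eqE /interval /=; move: i_before; lia.
exists a, k.+1; split => //.
by apply/setP => j; rewrite !inE -val_eqE /interval /=; move: i_before inflow; lia.
Qed.

(* A proper interval has one or two bordering nodes, each feeding it at rate
   lam / 2. *)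
Lemma isInterval_outRate (S : {set 'I_n0}) : isInterval S -> (#|S| < #|'I_n0|)%N ->
  lam / 2 <= outRate (line_lg lam) S <= lam.
Proof.
case=> a [k [a_lt k_gt0 ->]] S_lt.
have [j0] := exists_notin S_lt; rewrite inE => j0N.
rewrite /outRate (eq_bigr (fun i : 'I_n0 =>
    lam / 2 * ((0 < a) * ((i : nat) == a.-1) + ((i : nat) == a + k))%N%:R)); last first.
  by move=> i; rewrite !inE => iN; rewrite line_rateInto interval_inflow.
rewrite -mulr_sumr -natr_sum (eq_bigl (mem [set j : 'I_n0 | ~~ interval a k j])); last first.
  by move=> i; rewrite !inE.
rewrite big_split /= -big_distrr /= !(@sum_eq_indicator n0 (fun x => ~~ interval a k x)).
set t := (_ + _)%N.
have /andP[t_ge1 t_le2] : (1 <= t <= 2)%N.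
  by rewrite /t; move: j0N (ltn_ord j0); rewrite /interval; lia.
have half_gt0 : 0 < lam / 2 by rewrite divr_gt0.
apply/andP; split; first by rewrite ler_peMr ?ler1n // ltW.
by rewrite -[X in _ <= X](divfK (_ : 2 != 0)) ?pnatr_eq0 // ler_pM2l // ler_nat.
Qed.

(* For the ring, n0 >= 3 ensures that the wrap-around edge between n0 - 1
   and 0 is distinct from the line edges. *)
Hypothesis n0_ge3 : (2 < n0)%N.

Lemma ring_lg_ge0 (i j : 'I_n0) : 0 <= ring_lg lam i j.
Proof. by rewrite /ring_lg; case: ifP; rewrite // divr_ge0 ?ltW. Qed.

Lemma ring_lgE (i j : 'I_n0) : ring_lg lam i j =
  lam / 2 * (((j : nat) == i.+1) + (0 < i) * ((j : nat) == i.-1)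
     + ((i : nat) == n0.-1) * ((j : nat) == 0%N)
     + ((i : nat) == 0%N) * ((j : nat) == n0.-1))%N%:R.
Proof.
have := ltn_ord i; have := ltn_ord j; rewrite /ring_lg; case: ifP => edge j_lt i_lt.
  by rewrite (_ : (_ + _)%N = 1%N) ?mulr1 //; move: edge; lia.
by rewrite (_ : (_ + _)%N = 0%N) ?mulr0 //; move: edge; lia.
Qed.

Lemma ring_rateInto (i : 'I_n0) (p : pred nat) :
  rateInto (ring_lg lam) i [set j : 'I_n0 | p j] =
  lam / 2 * (((i.+1 < n0) && p i.+1) + (0 < i) * ((i.-1 < n0) && p i.-1)
    + ((i : nat) == n0.-1) * ((0 < n0) && p 0%N)
    + ((i : nat) == 0%N) * ((n0.-1 < n0) && p n0.-1))%N%:R.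
Proof.
rewrite /rateInto (eq_bigr _ (fun j _ => ring_lgE i j)) -mulr_sumr -natr_sum.
by rewrite !big_split /= -!big_distrr /= !sum_eq_indicator.
Qed.

Lemma isArc_grow (S : {set 'I_n0}) i : isArc S -> i \notin S ->
  0 < rateInto (ring_lg lam) i S -> isArc (i |: S).
Proof.
case=> a [k [a_lt k_gt0 ->]]; rewrite inE => iNS.
have i_lt := ltn_ord i; have k_lt := arc_short n0_ge3 a_lt k_gt0 i_lt iNS.
rewrite ring_rateInto // arc_inflow // pmulr_rgt0 ?divr_gt0 // ltr0n => inflow.
case: (boolP ((i : nat) == arc_before n0 a)) => [/eqP i_before | i_before].
  exists (arc_before n0 a), k.+1; split => //; first exact: arc_before_lt.
  by apply/setP => j; rewrite !inE -val_eqE /= i_before (arc_grow_before n0_ge3 a_lt k_gt0 k_lt (ltn_ord j)).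
have /eqP i_after : (i : nat) == arc_after n0 a k by move: i_before inflow; lia.
exists a, k.+1; split => //.
by apply/setP => j; rewrite !inE -val_eqE /= i_after (arc_grow_after n0_ge3 a_lt k_gt0 k_lt (ltn_ord j)).
Qed.

(* A proper arc is fed by exactly two edges (from one node if only that node
   is missing), so its inflow rate is exactly lam. *)
Lemma isArc_outRate (S : {set 'I_n0}) : isArc S -> (#|S| < #|'I_n0|)%N ->
  lam <= outRate (ring_lg lam) S <= lam.
Proof.
case=> a [k [a_lt k_gt0 ->]] S_lt.
have [j0] := exists_notin S_lt; rewrite inE => j0N.
have k_lt := arc_short n0_ge3 a_lt k_gt0 (ltn_ord j0) j0N.
rewrite /outRate (eq_bigr (fun i : 'I_n0 => lam / 2 *
    (((i : nat) == arc_before n0 a) + ((i : nat) == arc_after n0 a k))%N%:R)); last first.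
  by move=> i; rewrite !inE => iN; rewrite ring_rateInto // arc_inflow.
rewrite -mulr_sumr -natr_sum (eq_bigl (mem [set j : 'I_n0 | ~~ arc n0 a k j])); last first.
  by move=> i; rewrite !inE.
rewrite big_split /= !(@sum_eq_indicator n0 (fun x => ~~ arc n0 a k x)) arc_boundary_outside //.
by rewrite divfK ?pnatr_eq0 // lexx.
Qed.
End Rates.

Section Ages.
Variables (R : realFieldType) (n n0 : nat) (ls lam : R).
Hypotheses (n_gt0 : (0 < n)%N) (ls_gt0 : 0 < ls) (lam_gt0 : 0 < lam).

Local Notation c := (lam / n%:R).

Lemma source_rate_gt0 : 0 < c.
Proof. by rewrite divr_gt0 // ltr0n. Qed.

Lemma lineAge_homAge (i : 'I_n0) :
  homAge c ls lam n0.-1 1 <= lineAge n ls lam i <= homAge c ls (lam / 2) n0.-1 1.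
Proof.
have interval_i : isInterval [set i].
  exists (i : nat), 1%N; split => //.
  by apply/setP => j; rewrite !inE -val_eqE /interval /=; lia.
have half_gt0 : 0 < lam / 2 by rewrite divr_gt0.
have half_le : lam / 2 <= lam by rewrite ler_pdivrMr // ler_peMr ?(ltW lam_gt0) ?ler1n.
have := age_sandwich source_rate_gt0 ls_gt0 (line_lg_ge0 lam_gt0) half_gt0 half_le
  (@isInterval_card_gt0 n0) (isInterval_grow lam_gt0) (isInterval_outRate lam_gt0) interval_i.
by rewrite cards1 card_ord subn1.
Qed.

Hypothesis n0_ge3 : (2 < n0)%N.

Lemma ringAge_homAge (i : 'I_n0) : ringAge n ls lam i = homAge c ls lam n0.-1 1.
Proof.
have arc_i : isArc [set i].
  exists (i : nat), 1%N; split => //.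
  by apply/setP => j; rewrite !inE -val_eqE /arc /=; have := ltn_ord i; lia.
have := age_sandwich source_rate_gt0 ls_gt0 (ring_lg_ge0 lam_gt0) lam_gt0 (lexx lam)
  (@isArc_card_gt0 n0) (isArc_grow lam_gt0 n0_ge3) (isArc_outRate lam_gt0 n0_ge3) arc_i.
rewrite cards1 card_ord subn1 => /andP[age_ge age_le].
by apply/le_anti; rewrite /ringAge /nodeAge age_ge age_le.
Qed.
End Ages.

(* The main theorem keeps all its binders explicit.  Node 1 plays no special
   role: by symmetry every ring node has the same age. *)
Unset Implicit Arguments. Set Strict Implicit.

Theorem mainTheorem2 (R : realFieldType) (n n0 : nat) (ls lam : R)
  (hn : (1 <= n)%N) (hls : 0 < ls) (hlam : 0 < lam) (hn0 : (3 <= n0)%N)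
  (node1 : 'I_n0) (h1 : nat_of_ord node1 = 0%N) (i : 'I_n0) :
  ringAge n ls lam node1 <= lineAge n ls lam i <= 2 * ringAge n ls lam node1.
Proof.
rewrite (ringAge_homAge hn hls hlam hn0).
have /andP[line_ge line_le] := lineAge_homAge hn hls hlam i.
rewrite line_ge /=; apply: le_trans line_le _.
have := homAge_double (source_rate_gt0 hn hlam) hls n0.-1 (k := 1%N) (ltW (divr_gt0 hlam (ltr0Sn R 1))) isT.
by rewrite [2 * (lam / 2)]mulrC divfK ?pnatr_eq0.
Qed.
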